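(* With optimal play by both players, the transversal $3$-game is a draw: each of the two players has a strategy guaranteeing that they do not lose.
   Context: A transversal of an $n\times n$ grid is a set of $n$ cells no two of which lie in the same row or the same column. The transversal $n$-game is played on an $n\times n$ grid by two players who alternate moves, player 1 moving first. On each move, the player to move claims one currently unoccupied cell (player 1 marks it $X$, player 2 marks it $O$). The first player (if any) to have claimed all $n$ cells of some transversal wins. If the grid becomes completely filled and neither player has claimed a transversal, the game is a draw. *)

From mathcomp Require Import all_boot.
Set Implicit Arguments. Unset Strict Implicit. Unset Printing Implicit Defensive.

Definition cell (n : nat) := ('I_n * 'I_n)%type.

Definition is_transversal (n : nat) (T : {set cell n}) : bool :=
  (#|T| == n) &&
  [forall x in T, forall y in T, (x != y) ==> ((x.1 != y.1) && (x.2 != y.2))].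

Definition has_transversal (n : nat) (A : seq (cell n)) : bool :=
  [exists T : {set cell n}, is_transversal T && (T \subset [set x | x \in A])].

(* A history is the list of claimed cells in the order they were claimed.
   Move number k (0-based) is made by player 1 (X) if k is even and by
   player 2 (O) if k is odd.  We encode the player by a boolean p:
   p = false is player 1, p = true is player 2; player p makes the moves
   with odd k == p. *)
Definition claimed_by (n : nat) (p : bool) (h : seq (cell n)) : seq (cell n) :=
  [seq x.2 | x <- zip (iota 0 (size h)) h & odd x.1 == p].

Definition finished (n : nat) (h : seq (cell n)) : bool :=
  [|| has_transversal (claimed_by false h), has_transversal (claimed_by true h)
    | size h == n * n].

Definition legal_history (n : nat) (h : seq (cell n)) : bool :=
  uniq h && all (fun k => ~~ finished (take k h)) (iota 0 (size h)).

(* The player to move after history h is player (odd (size h)). *)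

Definition strategy (n : nat) := seq (cell n) -> cell n.

Definition consistent (n : nat) (p : bool) (sigma : strategy n) (h : seq (cell n)) : bool :=
  all (fun k => (odd k == p) ==> (take k.+1 h == rcons (take k h) (sigma (take k h))))
      (iota 0 (size h)).

Definition guarantees_no_loss (n : nat) (p : bool) (sigma : strategy n) : Prop :=
  (forall h : seq (cell n), legal_history h -> ~~ finished h ->
     odd (size h) = p -> consistent p sigma h -> sigma h \notin h) /\
  (forall h : seq (cell n), legal_history h -> finished h ->
     consistent p sigma h -> ~~ has_transversal (claimed_by (~~ p) h)).

From Pilot Require Import Defs.
From mathcomp Require Import all_boot perm.
Set Implicit Arguments. Unset Strict Implicit. Unset Printing Implicit Defensive.

(* Each player can play the greedy Erdos-Selfridge blocker: claim a free cell
   maximising the potential, the sum of 2 ^ (number of opponent's cells on t)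
   over the transversals t through it that contain none of the player's own
   cells.  The transversals of the n x n grid are the graphs of the
   permutations of 'I_n, and an exhaustive search over all replies of the
   opponent shows that on the 3 x 3 grid this greedy move never lets the
   opponent complete a transversal, whichever player uses it. *)

Section Transversals.
Variable n : nat.

Lemma has_transversal_perm (A : seq (cell n)) :
  has_transversal A = [exists s : 'S_n, [forall i, (i, s i) \in A]].
Proof.
apply/existsP/existsP => [[T /andP[/andP[/eqP card_T /forall_inP distT]]] | [s /forallP sA]].
- move=> /subsetP TA.
  have distinct x y : x \in T -> y \in T -> x != y -> (x.1 != y.1) && (x.2 != y.2).
    by move=> xT yT; move/forall_inP: (distT x xT) => /(_ y yT) /implyP.
  have row_inj : {in T &, injective fst}.
    move=> x y xT yT exy; apply/eqP; apply: contraT => /(distinct x y xT yT).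
    by rewrite exy eqxx.
  have row_onto i : exists j, (i, j) \in T.
    have : i \in [set x.1 | x in T].
      suff -> : [set x.1 | x in T] = setT by rewrite inE.
      apply/eqP; rewrite eqEcard subsetT cardsT card_ord card_in_imset //.
      by rewrite card_T leqnn.
    by case/imsetP=> -[i' j] xT /= ->; exists j.
  pose col i := odflt i [pick j | (i, j) \in T].
  have col_in i : (i, col i) \in T.
    by rewrite /col; case: pickP => [j //|none]; have [j] := row_onto i; rewrite none.
  have col_inj : injective col.
    move=> i k eik; apply/eqP; apply: contraT => nik.
    have /(distinct _ _ (col_in i) (col_in k)) : (i, col i) != (k, col k).
      by apply: contra nik => /eqP[->].
    by rewrite /= eik eqxx andbF.
  exists (perm col_inj); apply/forallP => i.
  by have := TA _ (col_in i); rewrite inE permE.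
- exists [set (i, s i) | i : 'I_n].
  rewrite /Defs.is_transversal card_imset; last by move=> i j [].
  rewrite card_ord eqxx /=; apply/andP; split.
    apply/forall_inP => _ /imsetP[i _ ->]; apply/forall_inP => _ /imsetP[j _ ->].
    by apply/implyP; rewrite /= xpair_eqE (inj_eq perm_inj) andbb => ->.
  by apply/subsetP => _ /imsetP[i _ ->]; rewrite inE.
Qed.

Lemma has_permutations_enum (P : pred (seq 'I_n)) :
  has P (permutations (enum 'I_n)) = [exists s : 'S_n, P [seq s i | i <- enum 'I_n]].
Proof.
have graphE (s : 'S_n) :
    [tuple tnth (ord_tuple n) (s i) | i < n] = [seq s i | i <- enum 'I_n] :> seq _.
  by apply: eq_map => i; rewrite tnth_ord_tuple.
apply/hasP/existsP => [[t] | [s Ps]].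
  rewrite mem_permutations => /(@tuple_permP _ _ _ (ord_tuple n))[s ->] Pt.
  by exists s; rewrite -graphE.
exists [seq s i | i <- enum 'I_n] => //; rewrite mem_permutations.
by apply/(@tuple_permP _ _ _ (ord_tuple n)); exists s; rewrite graphE.
Qed.

Lemma has_transversalE (A : seq (cell n)) :
  has_transversal A =
  has (all (mem A)) [seq zip (enum 'I_n) s | s <- permutations (enum 'I_n)].
Proof.
rewrite has_transversal_perm has_map has_permutations_enum; apply: eq_existsb => s /=.
rewrite -[X in zip X]map_id zip_map all_map.
by apply/forallP/allP => [sA i _ | sA i]; [exact: sA | exact/sA/mem_enum].
Qed.

End Transversals.

Lemma take_rcons (T : Type) (s : seq T) x k :
  k <= size s -> take k (rcons s x) = take k s.
Proof. by move=> le_k_s; rewrite -cats1 takel_cat. Qed.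

Section Plays.
Variable n : nat.
Implicit Types (h : seq (cell n)) (c : cell n) (p : bool) (sigma : strategy n).

Lemma legal_history_rcons h c :
  legal_history (rcons h c) = [&& legal_history h, ~~ finished h & c \notin h].
Proof.
rewrite /legal_history size_rcons rcons_uniq -addn1 iotaD all_cat /= andbT.
rewrite take_rcons // take_size (@eq_in_all _ _ (fun k => ~~ finished (take k h))).
  by rewrite -!andbA; case: (c \in h); rewrite /= ?andbF ?andbT.
by move=> k; rewrite mem_iota => /andP[_ lt_k_h]; rewrite take_rcons // ltnW.
Qed.

Lemma consistent_rcons p sigma h c :
  consistent p sigma (rcons h c) =
  consistent p sigma h && ((odd (size h) == p) ==> (c == sigma h)).
Proof.
rewrite /consistent size_rcons -addn1 iotaD all_cat /= andbT add0n.
rewrite (@take_rcons _ _ _ (size h)) // take_size take_oversize ?size_rcons // eqseq_rcons eqxx /=.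
congr (_ && _); apply: eq_in_all => k; rewrite mem_iota => /andP[_ lt_k_h].
by rewrite !take_rcons // ltnW.
Qed.

Lemma size_unfinished h : legal_history h -> ~~ finished h -> size h < n * n.
Proof.
case/andP=> uniq_h _; rewrite /finished => /norP[_ /norP[_ ne_size]].
rewrite ltn_neqAle ne_size -(card_uniqP uniq_h).
by have := max_card (mem h); rewrite card_prod card_ord.
Qed.

End Plays.

(* The search runs under vm_compute, where enum 'I_n is stuck (insub goes
   through the opaque idP) and the generic == on cells is very slow; it uses
   an explicit enumeration ords of 'I_n and the structural test eq_cell. *)
Section Certificate.
Variables (n : nat) (ords : seq 'I_n).
Implicit Types (A h : seq (cell n)) (c : cell n) (p : bool) (sigma : strategy n).

Definition eq_cell c c' := eqn c.1 c'.1 && eqn c.2 c'.2.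
Definition in_cells c A := has (eq_cell c) A.
Definition grid : seq (cell n) := [seq (i, j) | i <- ords, j <- ords].
Definition transversals : seq (seq (cell n)) := [seq zip ords s | s <- permutations ords].
Definition owns_transversal A := has (all (in_cells^~ A)) transversals.
Definition game_over h :=
  [|| owns_transversal (claimed_by false h), owns_transversal (claimed_by true h)
    | size h == n * n].

Fixpoint no_loss_within p sigma k h : bool :=
  if game_over h then ~~ owns_transversal (claimed_by (~~ p) h)
  else if k is k'.+1 then
    if odd (size h) == p then
      let c := sigma h in ~~ in_cells c h && no_loss_within p sigma k' (rcons h c)
    else all (fun c => in_cells c h || no_loss_within p sigma k' (rcons h c)) grid
  else false.

Definition potential (mine theirs : seq (cell n)) c : nat :=
  sumn [seq 2 ^ count (in_cells^~ theirs) t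
       | t <- transversals & in_cells c t && ~~ has (in_cells^~ mine) t].

Definition greedy_blocker (c0 : cell n) p : strategy n := fun h =>
  let free := [seq c <- grid | ~~ in_cells c h] in
  let pot := potential (claimed_by p h) (claimed_by (~~ p) h) in
  foldl (fun best c => if pot best < pot c then c else best) (head c0 free) free.

Hypothesis ordsE : ords = enum 'I_n.

Lemma in_cellsE c A : in_cells c A = (c \in A).
Proof. by rewrite -has_pred1; apply: eq_has => c' /=; rewrite eq_sym. Qed.

Lemma mem_grid c : c \in grid.
Proof.
by case: c => i j; rewrite /grid ordsE; apply/allpairsP; exists (i, j); rewrite !mem_enum.
Qed.

Lemma owns_transversalE A : owns_transversal A = has_transversal A.
Proof.
rewrite has_transversalE /owns_transversal /transversals ordsE.
by apply: eq_has => t; apply: eq_all => c; rewrite in_cellsE.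
Qed.

Lemma game_overE h : game_over h = finished h.
Proof. by rewrite /game_over !owns_transversalE. Qed.

Lemma no_loss_withinS p sigma k h :
  no_loss_within p sigma k.+1 h =
  if game_over h then ~~ owns_transversal (claimed_by (~~ p) h)
  else if odd (size h) == p then
    ~~ in_cells (sigma h) h && no_loss_within p sigma k (rcons h (sigma h))
  else all (fun c => in_cells c h || no_loss_within p sigma k (rcons h c)) grid.
Proof. by []. Qed.

Lemma no_loss_within_invariant p sigma h :
  no_loss_within p sigma (n * n) [::] -> legal_history h -> consistent p sigma h ->
  no_loss_within p sigma (n * n - size h) h.
Proof.
move=> start_ok; elim/last_ind: h => [_ _ | h c IHh]; first by rewrite subn0.
rewrite legal_history_rcons consistent_rcons => /and3P[legal_h unfinished_h c_new].
case/andP=> consistent_h move_c; have := IHh legal_h consistent_h.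
rewrite size_rcons -(subnSK (size_unfinished legal_h unfinished_h)).
rewrite no_loss_withinS game_overE (negbTE unfinished_h).
case: eqP move_c => [_ /eqP -> /andP[] // | _ _ /allP/(_ c (mem_grid c))].
by rewrite in_cellsE (negbTE c_new).
Qed.

Lemma no_loss_within_guarantees p sigma :
  no_loss_within p sigma (n * n) [::] -> guarantees_no_loss p sigma.
Proof.
move=> start_ok; split=> [h legal_h unfinished_h turn_p | h legal_h finished_h] consistent_h.
  have := no_loss_within_invariant start_ok legal_h consistent_h.
  rewrite -(subnSK (size_unfinished legal_h unfinished_h)).
  rewrite no_loss_withinS game_overE (negbTE unfinished_h) turn_p eqxx in_cellsE.
  by case/andP.
have := no_loss_within_invariant start_ok legal_h consistent_h.
by case: (_ - _) => [|k]; rewrite /= game_overE finished_h owns_transversalE.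
Qed.

End Certificate.

Definition ords3 : seq 'I_3 := [:: @Ordinal 3 0 isT; @Ordinal 3 1 isT; @Ordinal 3 2 isT].

Lemma ords3E : ords3 = enum 'I_3.
Proof. by apply: (inj_map val_inj); rewrite val_enum_ord. Qed.

Theorem mainTheorem2 :
  (exists sigma : strategy 3, guarantees_no_loss false sigma) /\
  (exists tau : strategy 3, guarantees_no_loss true tau).
Proof.
split; [exists (greedy_blocker ords3 (ord0, ord0) false)
       | exists (greedy_blocker ords3 (ord0, ord0) true)];
  apply: (no_loss_within_guarantees ords3E); by vm_compute.
Qed.
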